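(* Let $n\ge2$, $h\in(0,1]$, and for $0\le p\le2n$ let $\mathcal M_p$ be the set of minimizers of $H$ on $\mathcal C(p)$. (a) Suppose $0\le\epsilon\le1$. Let $p^*_1=\frac n2$ if $n$ is even, $p^*_1=\frac{n+1}2$ if $n$ is odd and $h\le\epsilon$, $p^*_1=\frac{n-1}2$ if $n$ is odd and $\epsilon<h$. Then the maximum of $H$ over $\bigcup_{0\le p\le2n}\mathcal M_p$ is attained by the configurations in $C(p^*_1,0,0)\cup C(0,p^*_1,0)$, and $\Gamma_m\ge\Gamma^1_m$, where $\Gamma^1_m=\frac{n^2}2+n(\epsilon-h)$ if $n$ is even, $\Gamma^1_m=\frac{n^2-1}2+(n+1)(\epsilon-h)$ if $n$ is odd and $h\le\epsilon$, $\Gamma^1_m=\frac{n^2-1}2+(n-1)(\epsilon-h)$ if $n$ is odd and $\epsilon<h$. (b) Suppose $0<-\epsilon<h$. Let $p^*_2=\frac{3n}2$ if $n$ is even and $p^*_2=\frac{3n-1}2$ if $n$ is odd. Then the maximum of $H$ over $\bigcup_{n\le p\le2n}\mathcal M_p$ is attained by the configurations in $C(n,p^*_2-n,p^*_2-n)\cup C(p^*_2-n,n,p^*_2-n)$, and $\Gamma_m\ge\Gamma^2_m$, where $\Gamma^2_m=\frac{n^2}2-n(\epsilon+h)$ if $n$ is even and $\Gamma^2_m=\frac{n^2-1}2-(n-1)(\epsilon+h)$ if $n$ is odd.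
   Context: Setup. The graph $\mathcal G(2,n)$ has vertex set $V=V^{(1)}\cup V^{(2)}$ with $V^{(1)}=\{1,\dots,n\}$, $V^{(2)}=\{n+1,\dots,2n\}$; its edge set is $E=E_{\mathrm{int}}\cup E_{\mathrm{cross}}$, where $E_{\mathrm{int}}$ consists of all pairs of distinct vertices in the same $V^{(k)}$ and $E_{\mathrm{cross}}=\{\{i,i+n\}:1\le i\le n\}$. The configuration space is $\mathcal X=\{-1,+1\}^V$ and $H(\sigma)=-\sum_{\{i,j\}\in E_{\mathrm{int}}}\sigma_i\sigma_j-\epsilon\sum_{\{i,j\}\in E_{\mathrm{cross}}}\sigma_i\sigma_j-h\sum_{i\in V}\sigma_i$, $\epsilon\in[-1,1]$. $C(p_1,p_2,a)$ is the set of configurations with exactly $p_1$ vertices of spin $+1$ in $V^{(1)}$, exactly $p_2$ vertices of spin $+1$ in $V^{(2)}$, and exactly $a$ cross-edges both of whose endpoints have spin $+1$. $\mathcal C(p)$ is the set of configurations with exactly $p$ vertices of spin $+1$. Energy landscape. Paths are sequences of configurations in which consecutive ones differ at exactly one vertex; $\Phi(\eta,\eta')=\min_{\omega:\eta\to\eta'}\max_{\zeta\in\omega}H(\zeta)$, $\Phi(\eta,A)=\min_{\eta'\in A}\Phi(\eta,\eta')$. The stability level is $V_\zeta=\Phi(\zeta,\{\eta:H(\eta)<H(\zeta)\})-H(\zeta)$ ($\infty$ if that set is empty). $\mathcal X_s$ is the set of global minimizers of $H$, and $\Gamma_m=\max_{\zeta\in\mathcal X\setminus\mathcal X_s}V_\zeta$.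 *)

From HB Require Import structures.
From mathcomp Require Import all_boot all_order all_algebra.
From mathcomp Require Import all_classical all_reals ereal.
Set Implicit Arguments. Unset Strict Implicit. Unset Printing Implicit Defensive.
Import Order.TTheory GRing.Theory Num.Theory.
Local Open Scope ring_scope.
Local Open Scope classical_set_scope.

(* Vertices of G(2,n): 'I_(n+n); vertex v (0-indexed) lies in V^(1) iff v < n.
   Paper vertex i (1<=i<=n) is lshift n (i-1); paper vertex i+n is rshift n (i-1). *)
Definition vtx (n : nat) := 'I_(n + n).
Definition in_V1 (n : nat) (v : vtx n) : bool := (v < n)%N.

Definition config (n : nat) := {ffun vtx n -> bool}.

Definition spin (R : realType) (b : bool) : R := if b then 1 else -1.

Definition Hint (R : realType) (n : nat) (s : config n) : R :=
  \sum_(u : vtx n) \sum_(v : vtx n | (u < v)%N && (in_V1 u == in_V1 v))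
     spin R (s u) * spin R (s v).

Definition Hcross (R : realType) (n : nat) (s : config n) : R :=
  \sum_(i < n) spin R (s (lshift n i)) * spin R (s (rshift n i)).

Definition Hfield (R : realType) (n : nat) (s : config n) : R :=
  \sum_(v : vtx n) spin R (s v).

Definition H (R : realType) (n : nat) (eps h : R) (s : config n) : R :=
  - Hint R s - eps * Hcross R s - h * Hfield R s.

Definition Cset (n : nat) (p1 p2 a : nat) : {set config n} :=
  [set s : config n |
     [&& #|[set i : 'I_n | s (lshift n i)]| == p1,
         #|[set i : 'I_n | s (rshift n i)]| == p2 &
         #|[set i : 'I_n | s (lshift n i) && s (rshift n i)]| == a]].

Definition Cp (n : nat) (p : nat) : {set config n} :=
  [set s : config n | #|[set v | s v]| == p].

Definition Mp (R : realType) (n : nat) (eps h : R) (p : nat) : {set config n} :=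
  [set s in Cp n p | [forall t in Cp n p, H eps h s <= H eps h t]].

Definition adj (n : nat) (s t : config n) : bool :=
  #|[set v | s v != t v]| == 1%N.

Definition is_path (n : nat) (eta eta' : config n) (w : seq (config n)) : bool :=
  path (@adj n) eta w && (last eta w == eta').

Definition path_max (R : realType) (n : nat) (eps h : R) (eta : config n)
    (w : seq (config n)) : R :=
  \big[Num.max/H eps h eta]_(z <- w) H eps h z.

Definition Phi (R : realType) (n : nat) (eps h : R) (eta eta' : config n) : \bar R :=
  ereal_inf [set (path_max eps h eta w)%:E | w in [set w | is_path eta eta' w]].

(* Phi(eta,A) = min over eta' in A (= +oo if A empty) *)
Definition PhiA (R : realType) (n : nat) (eps h : R) (eta : config n)
    (A : set (config n)) : \bar R :=
  ereal_inf [set Phi eps h eta e | e in A].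

(* stability level V_zeta (= +oo when no lower configuration exists) *)
Definition stab (R : realType) (n : nat) (eps h : R) (z : config n) : \bar R :=
  (PhiA eps h z [set e | (H eps h e < H eps h z)%R] - (H eps h z)%:E)%E.

Definition Xs (R : realType) (n : nat) (eps h : R) : set (config n) :=
  [set s : config n | forall t : config n, (H eps h s <= H eps h t)%R].

Definition Gamma_m (R : realType) (n : nat) (eps h : R) : \bar R :=
  ereal_sup [set stab eps h z | z in ~` (@Xs R n eps h)].

From HB Require Import structures.
From mathcomp Require Import all_boot all_order all_algebra.
From mathcomp Require Import all_classical all_reals ereal.
From mathcomp Require Import ring lra zify.
Import Order.TTheory GRing.Theory Num.Theory.
Set Implicit Arguments. Unset Strict Implicit. Unset Printing Implicit Defensive.
Local Open Scope ring_scope.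

(* The energy of a configuration depends only on the numbers of + spins in
   V^(1), in V^(2) and on cross edges.  For a fixed total p of + spins it is
   minimised by grouping them: all in one part when eps <= 1 and p <= n, and by
   filling V^(1) and aligning the rest with it when eps <= 0 and p >= n.  These
   minimal energies are concave quadratics in p, maximised at the integer p*
   nearest to their vertex.  A single spin flip changes the number of + spins by
   one, so every path from the all-minus configuration (resp. the configuration
   that is + exactly on V^(1)) down to a lower energy passes through a
   configuration with p* + spins; this bounds its stability level, and hence
   Gamma_m, from below. *)

Lemma card_classic_set (T : finType) (P : pred T) :
  #|[set x | P x]%classic| = #|[set x | P x]|.
Proof.
apply: eq_card => x; rewrite inE.
by apply/idP/idP => Px; [move: Px; rewrite in_setE | rewrite in_setE].
Qed.

Lemma card_set_sum (T : finType) (P : pred T) : #|[set x | P x]| = (\sum_x P x)%N.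
Proof. by rewrite -sum1dep_card big_mkcond; apply: eq_bigr => x _; case: (P x). Qed.

Lemma natr_card_set (R : pzSemiRingType) (T : finType) (P : pred T) :
  #|[set x | P x]|%:R = \sum_x (P x)%:R :> R.
Proof. by rewrite card_set_sum natr_sum. Qed.

Section Spins.
Variable R : realType.

Lemma spinE (b : bool) : spin R b = 2 * b%:R - 1.
Proof. by case: b; rewrite /spin /=; lra. Qed.

Lemma spin_mul (b c : bool) :
  spin R b * spin R c = 1 - 2 * b%:R - 2 * c%:R + 4 * (b && c)%:R.
Proof. by case: b; case: c; rewrite /spin /=; lra. Qed.

Lemma sum_spin (T : finType) (f : T -> bool) :
  \sum_x spin R (f x) = 2 * #|[set x | f x]|%:R - #|T|%:R.
Proof.
rewrite natr_card_set (eq_bigr _ (fun x _ => spinE (f x))).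
by rewrite sumrB -mulr_sumr sumr_const.
Qed.

End Spins.

Section Counts.
Variable n : nat.
Implicit Types s t : config n.

Definition upsL s : nat := #|[set i : 'I_n | s (lshift n i)]|.
Definition upsR s : nat := #|[set i : 'I_n | s (rshift n i)]|.
Definition upsLR s : nat := #|[set i : 'I_n | s (lshift n i) && s (rshift n i)]|.
Definition ups s : nat := #|[set v : vtx n | s v]|.

Lemma upsE s : ups s = (upsL s + upsR s)%N.
Proof. by rewrite /ups /upsL /upsR !card_set_sum /vtx big_split_ord. Qed.

Lemma upsLR_leL s : (upsLR s <= upsL s)%N.
Proof. by apply/subset_leq_card/fintype.subsetP => i; rewrite !inE => /andP[]. Qed.

Lemma upsLR_leR s : (upsLR s <= upsR s)%N.
Proof. by apply/subset_leq_card/fintype.subsetP => i; rewrite !inE => /andP[]. Qed.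

Lemma upsL_le s : (upsL s <= n)%N.
Proof. by rewrite -[leqRHS]card_ord max_card. Qed.

Lemma upsR_le s : (upsR s <= n)%N.
Proof. by rewrite -[leqRHS]card_ord max_card. Qed.

Lemma upsLR_ge s : (upsL s + upsR s <= n + upsLR s)%N.
Proof.
rewrite /upsL /upsR -cardsUI.
have -> : [set i | s (lshift n i)] :&: [set i | s (rshift n i)] =
          [set i | s (lshift n i) && s (rshift n i)] by apply/setP => i; rewrite !inE.
by rewrite leq_add2r -[leqRHS]card_ord max_card.
Qed.

Lemma Cset_counts s a b c :
  s \in Cset n a b c -> [/\ upsL s = a, upsR s = b & upsLR s = c].
Proof. by rewrite inE !card_classic_set => /and3P[/eqP ? /eqP ? /eqP ?]. Qed.

Lemma Cp_ups s p : (s \in Cp n p) = (ups s == p).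
Proof. by rewrite inE card_classic_set. Qed.

End Counts.

Definition Hcounts (R : realType) (n : nat) (eps h X Y A : R) : R :=
  - (((2 * X - n%:R) ^+ 2 + (2 * Y - n%:R) ^+ 2 - 2 * n%:R) / 2)
  - eps * (n%:R - 2 * X - 2 * Y + 4 * A) - h * (2 * X + 2 * Y - 2 * n%:R).

Lemma HcountsC (R : realType) n (eps h X Y A : R) :
  Hcounts n eps h X Y A = Hcounts n eps h Y X A.
Proof. by rewrite /Hcounts; ring. Qed.

Lemma sum_same_part (R : realType) m (k : 'I_m -> bool) (G : 'I_m -> 'I_m -> R) :
  (forall u v : 'I_m, G u v = G v u) ->
  \sum_(u : 'I_m) \sum_(v : 'I_m | k u == k v) G u v =
  2 * (\sum_(u : 'I_m) \sum_(v : 'I_m | (u < v)%N && (k u == k v)) G u v)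
  + \sum_(u : 'I_m) G u u.
Proof.
move=> Gsym.
have split_diag (u : 'I_m) : \sum_(v : 'I_m | k u == k v) G u v =
    \sum_(v : 'I_m | (u < v)%N && (k u == k v)) G u v +
    \sum_(v : 'I_m | (v < u)%N && (k u == k v)) G u v + G u u.
  rewrite (bigD1 u) ?eqxx //= addrC; congr (_ + _).
  rewrite (bigID (fun v : 'I_m => (u < v)%N)) /=; congr (_ + _); apply: eq_bigl => v;
    rewrite -(inj_eq val_inj) /= neq_ltn; case: ltngtP; rewrite ?andbT ?andbF //.
rewrite (eq_bigr _ (fun u _ => split_diag u)) !big_split /= mulr2n mulrDl mul1r.
congr (_ + _ + _).
rewrite (exchange_big_dep xpredT) //=; apply: eq_bigr => u _.
by apply: eq_big => [v|v _]; [rewrite eq_sym | exact: Gsym].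
Qed.

Section EnergyInCounts.
Variables (R : realType) (n : nat).
Implicit Type s : config n.

Lemma in_V1_lshift (i : 'I_n) : in_V1 (lshift n i) = true.
Proof. by rewrite /in_V1 /= ltn_ord. Qed.

Lemma in_V1_rshift (i : 'I_n) : in_V1 (rshift n i) = false.
Proof. by rewrite /in_V1 /= ltnNge leq_addr. Qed.

Lemma Hfield_counts s : Hfield R s = 2 * (upsL s)%:R + 2 * (upsR s)%:R - 2 * n%:R.
Proof. by rewrite /Hfield /vtx big_split_ord /= !sum_spin card_ord; lra. Qed.

Lemma Hcross_counts s :
  Hcross R s = n%:R - 2 * (upsL s)%:R - 2 * (upsR s)%:R + 4 * (upsLR s)%:R.
Proof.
rewrite /Hcross (eq_bigr _ (fun i _ => spin_mul _ _ _)) big_split /= !sumrB.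
by rewrite -!mulr_sumr sumr_const card_ord /upsL /upsR /upsLR !natr_card_set; lra.
Qed.

Lemma sum_spin_same_part s (u : vtx n) :
  \sum_(v : vtx n | in_V1 u == in_V1 v) spin R (s v) =
  if in_V1 u then \sum_(i < n) spin R (s (lshift n i))
  else \sum_(i < n) spin R (s (rshift n i)).
Proof.
rewrite /vtx big_split_ord /=; case: (in_V1 u).
  rewrite [X in _ + X]big_pred0 ?addr0 => [|i]; last by rewrite in_V1_rshift.
  by apply: eq_bigl => i; rewrite in_V1_lshift.
rewrite [X in X + _]big_pred0 ?add0r => [|i]; last by rewrite in_V1_lshift.
by apply: eq_bigl => i; rewrite in_V1_rshift.
Qed.

Lemma Hint_counts s :
  Hint R s = ((2 * (upsL s)%:R - n%:R) ^+ 2 + (2 * (upsR s)%:R - n%:R) ^+ 2 - 2 * n%:R) / 2.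
Proof.
have := sum_same_part (@in_V1 n) (fun u v => mulrC (spin R (s u)) (spin R (s v))).
have -> : \sum_(u : vtx n) spin R (s u) * spin R (s u) = 2 * n%:R.
  rewrite (eq_bigr (fun _ => 1)) => [|u _]; last by case: (s u); rewrite /spin; lra.
  by rewrite sumr_const card_ord natrD; lra.
under eq_bigr => u _ do rewrite -mulr_sumr sum_spin_same_part.
rewrite /vtx big_split_ord /=.
under eq_bigr => i _ do rewrite in_V1_lshift.
under [X in _ + X = _]eq_bigr => i _ do rewrite in_V1_rshift.
rewrite -!mulr_suml !sum_spin !card_ord -!expr2 /Hint => ->.
by rewrite /upsL /upsR; field.
Qed.

Lemma H_counts (eps h : R) s :
  H eps h s = Hcounts n eps h (upsL s)%:R (upsR s)%:R (upsLR s)%:R.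
Proof. by rewrite /H Hint_counts Hcross_counts Hfield_counts. Qed.

End EnergyInCounts.

Section Prefix.
Variable n : nat.

(* + spins on the first min(p, n) vertices of V^(1) and on the partners of the
   first p - n of them in V^(2). *)
Definition prefix_config (p : nat) : config n := [ffun v : vtx n => (v < p)%N].

Lemma sum_in_range c p : (\sum_(i < n) (c + i < p)%N)%N = minn (p - c) n.
Proof.
rewrite -(big_mkord xpredT (fun i => nat_of_bool (c + i < p)%N)).
elim: n => [|k IH]; first by rewrite big_geq //; lia.
by rewrite big_nat_recr //= IH; case: (ltnP (c + k) p) => /=; lia.
Qed.

Lemma upsL_prefix p : upsL (prefix_config p) = minn p n.
Proof.
rewrite /upsL card_set_sum -[p in RHS]subn0 -(sum_in_range 0 p).
by apply: eq_bigr => i _; rewrite ffunE.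
Qed.

Lemma upsR_prefix p : upsR (prefix_config p) = minn (p - n) n.
Proof.
by rewrite /upsR card_set_sum -(sum_in_range n p); apply: eq_bigr => i _; rewrite ffunE.
Qed.

Lemma upsLR_prefix p : upsLR (prefix_config p) = minn (p - n) n.
Proof.
rewrite /upsLR card_set_sum -(sum_in_range n p); apply: eq_bigr => i _.
rewrite !ffunE /=; congr nat_of_bool; apply/andP/idP => [[]//|ltp]; split=> //.
by rewrite (leq_ltn_trans _ ltp) ?leq_addl.
Qed.

Lemma ups_prefix p : (p <= n + n)%N -> ups (prefix_config p) = p.
Proof. by rewrite upsE upsL_prefix upsR_prefix; lia. Qed.

Variables (R : realType) (eps h : R).

Lemma H_prefix_lo p : (p <= n)%N -> H eps h (prefix_config p) = Hcounts n eps h p%:R 0 0.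
Proof.
move=> le_pn; rewrite H_counts upsL_prefix upsR_prefix upsLR_prefix.
have -> : minn p n = p by lia.
by have -> : minn (p - n) n = 0%N by lia.
Qed.

Lemma H_prefix_hi q :
  (q <= n)%N -> H eps h (prefix_config (n + q)) = Hcounts n eps h n%:R q%:R q%:R.
Proof.
move=> le_qn; rewrite H_counts upsL_prefix upsR_prefix upsLR_prefix.
have -> : minn (n + q) n = n by lia.
by have -> : minn (n + q - n) n = q by lia.
Qed.

End Prefix.

Section LowerBounds.
Variables (R : realType) (n : nat) (eps h : R).

Lemma Hcounts_merge (X Y A : R) :
  eps <= 1 -> 0 <= A -> A <= X * Y ->
  Hcounts n eps h (X + Y) 0 0 <= Hcounts n eps h X Y A.
Proof.
move=> e1 A0 AXY; have : eps * A <= A by nra.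
by rewrite /Hcounts; nra.
Qed.

Lemma Hcounts_fill (X Y A : R) :
  eps <= 0 -> X + Y - n%:R <= A -> X <= n%:R -> Y <= n%:R ->
  Hcounts n eps h n%:R (X + Y - n%:R) (X + Y - n%:R) <= Hcounts n eps h X Y A.
Proof.
move=> e0 geA leX leY.
have : 0 <= (n%:R - X) * (n%:R - Y) by apply: mulr_ge0; lra.
have : 0 <= eps * (X + Y - n%:R - A) by apply: mulr_le0; lra.
by rewrite /Hcounts; nra.
Qed.

Lemma H_ge_lo (t : config n) : eps <= 1 -> Hcounts n eps h (ups t)%:R 0 0 <= H eps h t.
Proof.
move=> e1; rewrite H_counts upsE natrD; apply: Hcounts_merge => //.
rewrite -natrM ler_nat.
by have := upsLR_leL t; have := upsLR_leR t; nia.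
Qed.

Lemma H_ge_hi (t : config n) q :
  eps <= 0 -> ups t = (n + q)%N -> Hcounts n eps h n%:R q%:R q%:R <= H eps h t.
Proof.
move=> e0 ups_t; rewrite H_counts.
have -> : q%:R = (upsL t)%:R + (upsR t)%:R - n%:R :> R.
  by rewrite -natrD -upsE ups_t natrD addrC addKr.
apply: Hcounts_fill; rewrite ?ler_nat ?upsL_le ?upsR_le //.
by rewrite lerBlDl -!natrD ler_nat upsLR_ge.
Qed.

Lemma mem_Mp p (z : config n) :
  ups z = p -> (forall t : config n, ups t = p -> H eps h z <= H eps h t) ->
  z \in @Mp R n eps h p.
Proof.
move=> ups_z zmin; rewrite inE Cp_ups ups_z eqxx /=.
by apply/forallP => t; apply/implyP; rewrite Cp_ups => /eqP; apply: zmin.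
Qed.

Lemma Mp_min p (e t : config n) : e \in @Mp R n eps h p -> ups t = p -> H eps h e <= H eps h t.
Proof.
rewrite inE => /andP[_ /forallP emin] ups_t.
by have /implyP := emin t; apply; rewrite Cp_ups ups_t.
Qed.

End LowerBounds.

Section Barrier.
Variables (R : realType) (n : nat) (eps h : R).

Lemma ups_adj (s t : config n) : adj s t -> (ups t <= (ups s).+1)%N.
Proof.
rewrite /adj card_classic_set => /eqP one_flip.
have sub : [set v | t v] \subset [set v | s v] :|: [set v | s v != t v].
  by apply/fintype.subsetP => v; rewrite !inE => ->; case: (s v).
by rewrite (leq_trans (subset_leq_card sub)) // -addn1 -one_flip leq_card_setU.
Qed.

Lemma path_crosses_level (eta : config n) w p :
  path (@adj n) eta w -> (ups eta <= p <= ups (last eta w))%N ->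
  exists2 z, z \in eta :: w & ups z = p.
Proof.
elim: w eta => [|t w IH] eta /=.
  by move=> _ /andP[le1 le2]; exists eta; rewrite ?mem_head //; apply/eqP; rewrite eqn_leq le1.
move=> /andP[adj_t path_w] /andP[le1 le2].
have [ltp | gep] := ltnP (ups eta) p; last first.
  by exists eta; rewrite ?mem_head //; apply/eqP; rewrite eqn_leq le1.
have [z zw ups_z] := IH t path_w (introT andP (conj (leq_trans (ups_adj adj_t) ltp) le2)).
by exists z; rewrite // inE zw orbT.
Qed.

Lemma le_path_max (eta z : config n) w :
  z \in eta :: w -> H eps h z <= path_max eps h eta w.
Proof.
rewrite inE => /orP[/eqP ->|zw]; first exact: bigmax_ge_id.
exact: le_bigmax_seq.
Qed.

Lemma Phi_ge_barrier (eta e : config n) p (M : R) :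
  (ups eta <= p <= ups e)%N -> (forall z : config n, ups z = p -> M <= H eps h z) ->
  (M%:E <= Phi eps h eta e)%E.
Proof.
move=> le_p barrier; apply/ereal_infP => _ [w /= /andP[path_w /eqP last_w] <-].
rewrite lee_fin.
have [z zw ups_z] : exists2 z, z \in eta :: w & ups z = p.
  by apply: path_crosses_level path_w _; rewrite last_w.
exact: le_trans (barrier _ ups_z) (le_path_max zw).
Qed.

Lemma stab_ge_barrier (eta : config n) p (G : R) :
  (forall e : config n, H eps h e < H eps h eta -> (ups eta <= p <= ups e)%N) ->
  (forall z : config n, ups z = p -> H eps h eta + G <= H eps h z) ->
  (G%:E <= stab eps h eta)%E.
Proof.
move=> below_p barrier.
suff : ((H eps h eta + G)%:E <= PhiA eps h eta [set e | (H eps h e < H eps h eta)%R])%E.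
  rewrite /stab; case: PhiA => [r||] //=.
    by rewrite !lee_fin => ?; lra.
  by move=> _; rewrite leey.
by apply/ereal_infP => _ [e /= lt_e <-]; apply: Phi_ge_barrier (below_p _ lt_e) barrier.
Qed.

Lemma Gamma_m_ge_stab (eta e : config n) (G : R) :
  H eps h e < H eps h eta -> (G%:E <= stab eps h eta)%E -> (G%:E <= @Gamma_m R n eps h)%E.
Proof.
move=> lt_e /le_trans; apply; apply: ereal_sup_ubound; exists eta => //.
by move=> /(_ e); rewrite leNgt lt_e.
Qed.

End Barrier.

Lemma nat_sqr_round (R : realFieldType) (p q : nat) (c : R) :
  2 * q%:R - 1 <= c -> c < 2 * q%:R + 1 ->
  q%:R ^+ 2 - c * q%:R <= p%:R ^+ 2 - c * p%:R.
Proof.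
move=> c_lo c_hi.
suff : 0 <= (p%:R - q%:R) * (p%:R + q%:R - c) :> R by move=> ?; nra.
have [ltpq | ltqp | ->] := ltngtP p q; last by rewrite subrr mul0r.
- have : p.+1%:R <= q%:R :> R by rewrite ler_nat.
  by rewrite -natr1 => ?; apply: mulr_le0; lra.
- have : q.+1%:R <= p%:R :> R by rewrite ler_nat.
  by rewrite -natr1 => ?; apply: mulr_ge0; lra.
Qed.

Lemma H_Cset_pair (R : realType) n (eps h : R) a b c (z : config n) :
  z \in Cset n a b c :|: Cset n b a c ->
  H eps h z = Hcounts n eps h a%:R b%:R c%:R /\ ups z = (a + b)%N.
Proof.
rewrite H_counts upsE; case/setUP => /Cset_counts[-> -> ->] //.
by rewrite HcountsC addnC.
Qed.

Definition pstar1 (R : realType) (n : nat) (eps h : R) : nat :=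
  if odd n then (if h <= eps then n.+1./2 else n./2) else n./2.

Definition Gamma1 (R : realType) (n : nat) (eps h : R) : R :=
  if ~~ odd n then (n%:R ^+ 2) / 2 + n%:R * (eps - h)
  else if h <= eps then (n%:R ^+ 2 - 1) / 2 + n.+1%:R * (eps - h)
  else (n%:R ^+ 2 - 1) / 2 + n.-1%:R * (eps - h).

Section FerromagneticCoupling.
Variables (R : realType) (n : nat) (eps h : R).

Local Notation p1 := (pstar1 n eps h).
Local Notation Hc := (Hcounts n eps h).

(* [p1] is the integer nearest to the vertex (n + eps - h) / 2 of the parabola
   [p |-> Hc p 0 0]. *)
Lemma pstar1_spec :
  (2 <= n)%N -> 0 < h -> h <= 1 -> 0 <= eps -> eps <= 1 ->
  [/\ (p1 < n)%N, 2 * p1%:R - 1 <= n%:R + eps - h, n%:R + eps - h < 2 * p1%:R + 1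
    & Hc 0 0 0 + Gamma1 n eps h = Hc p1%:R 0 0].
Proof.
move=> n_ge2 h_gt0 h_le1 eps_ge0 eps_le1.
have n_succ : n.+1%:R = n%:R + 1 :> R by rewrite -natr1.
have n_pred : n.-1%:R = n%:R - 1 :> R by rewrite -subn1 natrB //; lia.
rewrite /pstar1 /Gamma1 n_succ n_pred /Hcounts -uphalfE uphalf_half.
have := odd_double_half n; move: (n./2) => m.
case: (odd n) => /= n_m; last first.
  have -> : n%:R = 2 * m%:R :> R by rewrite -n_m -addnn natrD; lra.
  by split; [lia | lra | lra | field].
have -> : n%:R = 2 * m%:R + 1 :> R by rewrite -n_m -addnn add1n -natr1 natrD; lra.
case: ifP => [le_h | /negbT]; last rewrite -ltNge => lt_eps.
  by rewrite add1n -natr1; split; [lia | lra | lra | field].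
by split; [lia | lra | lra | field].
Qed.

Lemma Hcounts_lo_le_pstar1 p :
  (2 <= n)%N -> 0 < h -> h <= 1 -> 0 <= eps -> eps <= 1 ->
  Hc p%:R 0 0 <= Hc p1%:R 0 0.
Proof.
move=> n_ge2 h_gt0 h_le1 eps_ge0 eps_le1.
have [_ c_lo c_hi _] := pstar1_spec n_ge2 h_gt0 h_le1 eps_ge0 eps_le1.
by have := nat_sqr_round p c_lo c_hi; rewrite /Hcounts; nra.
Qed.

(* Flipping every spin maps C(n, q, q) to C(0, n - q, 0) and only raises the
   field energy. *)
Lemma Hcounts_hi_le_pstar1 q :
  (2 <= n)%N -> 0 < h -> h <= 1 -> 0 <= eps -> eps <= 1 -> (q <= n)%N ->
  Hc n%:R q%:R q%:R <= Hc p1%:R 0 0.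
Proof.
move=> n_ge2 h_gt0 h_le1 eps_ge0 eps_le1 le_qn.
have := Hcounts_lo_le_pstar1 (n - q) n_ge2 h_gt0 h_le1 eps_ge0 eps_le1.
have : 0 <= h * q%:R by rewrite mulr_ge0 // ltW.
by rewrite natrB // /Hcounts; nra.
Qed.

Lemma Hcounts_lo_ge_all_minus p :
  h <= 1 -> 0 <= eps -> (p < n)%N -> Hc 0 0 0 <= Hc p%:R 0 0.
Proof.
move=> h_le1 eps_ge0 lt_pn; have : p.+1%:R <= n%:R :> R by rewrite ler_nat.
rewrite -natr1 => le_pn.
have : 0 <= p%:R * (n%:R - p%:R + eps - h) by rewrite mulr_ge0 //; lra.
by rewrite /Hcounts; nra.
Qed.

Lemma pstar1_max_Mp (z : config n) :
  (2 <= n)%N -> 0 < h -> h <= 1 -> 0 <= eps -> eps <= 1 ->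
  z \in Cset n p1 0 0 :|: Cset n 0 p1 0 ->
  (exists2 p : nat, (p <= n + n)%N & z \in @Mp R n eps h p) /\
  (forall (p : nat) (e : config n), (p <= n + n)%N -> e \in @Mp R n eps h p ->
     H eps h e <= H eps h z).
Proof.
move=> n_ge2 h_gt0 h_le1 eps_ge0 eps_le1 /(H_Cset_pair eps h)[Hz ups_z].
have [lt_p1n _ _ _] := pstar1_spec n_ge2 h_gt0 h_le1 eps_ge0 eps_le1.
rewrite addn0 in ups_z; split.
  exists p1; first by lia.
  by apply: mem_Mp => // t ups_t; rewrite Hz -ups_t H_ge_lo.
move=> p e le_p2n e_min; rewrite Hz; apply: le_trans (Mp_min e_min (ups_prefix le_p2n)) _.
have [le_pn | lt_np] := leqP p n.
  by rewrite H_prefix_lo // Hcounts_lo_le_pstar1.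
by rewrite -(subnKC (ltnW lt_np)) H_prefix_hi ?Hcounts_hi_le_pstar1 //; lia.
Qed.

Lemma Gamma1_le_Gamma_m :
  (2 <= n)%N -> 0 < h -> h <= 1 -> 0 <= eps -> eps <= 1 ->
  ((Gamma1 n eps h)%:E <= @Gamma_m R n eps h)%E.
Proof.
move=> n_ge2 h_gt0 h_le1 eps_ge0 eps_le1.
have [lt_p1n _ _ gap] := pstar1_spec n_ge2 h_gt0 h_le1 eps_ge0 eps_le1.
have H_minus : H eps h (@prefix_config n 0) = Hc 0 0 0 by rewrite H_prefix_lo.
apply: (@Gamma_m_ge_stab _ _ _ _ (@prefix_config n 0) (@prefix_config n (n + n))).
  rewrite H_minus H_prefix_hi //.
  have : 0 < h * n%:R by rewrite mulr_gt0 // ltr0n; lia.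
  by rewrite /Hcounts; nra.
apply: (@stab_ge_barrier _ _ _ _ _ p1) => [e | z ups_z].
  rewrite ups_prefix // leq0n leqNgt H_minus => lt_e; apply/negP => lt_ep1.
  have := H_ge_lo h e eps_le1.
  have := Hcounts_lo_ge_all_minus h_le1 eps_ge0 (ltn_trans lt_ep1 lt_p1n).
  by lra.
by have := H_ge_lo h z eps_le1; rewrite ups_z H_minus gap.
Qed.

End FerromagneticCoupling.

Definition pstar2 (n : nat) : nat := (3 * n)./2.

Definition Gamma2 (R : realType) (n : nat) (eps h : R) : R :=
  if ~~ odd n then (n%:R ^+ 2) / 2 - n%:R * (eps + h)
  else (n%:R ^+ 2 - 1) / 2 - n.-1%:R * (eps + h).

Section AntiferromagneticCoupling.
Variables (R : realType) (n : nat) (eps h : R).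

Local Notation m := n./2.
Local Notation Hc := (Hcounts n eps h).

(* [m] is the integer nearest to the vertex (n - eps - h) / 2 of the parabola
   [q |-> Hc n q q]. *)
Lemma pstar2_spec :
  (2 <= n)%N -> h <= 1 -> 0 < - eps -> - eps < h ->
  [/\ pstar2 n = (n + m)%N, 2 * m%:R - 1 <= n%:R - eps - h,
      n%:R - eps - h < 2 * m%:R + 1 & Hc n%:R 0 0 + Gamma2 n eps h = Hc n%:R m%:R m%:R].
Proof.
move=> n_ge2 h_le1 eps_lt0 eps_gt_h.
have n_pred : n.-1%:R = n%:R - 1 :> R by rewrite -subn1 natrB //; lia.
rewrite /pstar2 /Gamma2 n_pred /Hcounts.
have -> : (3 * n)./2 = (n + m)%N by lia.
have := odd_double_half n; move: m => k.
case: (odd n) => /= n_k.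
  have -> : n%:R = 2 * k%:R + 1 :> R by rewrite -n_k -addnn add1n -natr1 natrD; lra.
  by split; [by [] | lra | lra | field].
have -> : n%:R = 2 * k%:R :> R by rewrite -n_k -addnn natrD; lra.
by split; [by [] | lra | lra | field].
Qed.

Lemma Hcounts_hi_le_pstar2 q :
  (2 <= n)%N -> h <= 1 -> 0 < - eps -> - eps < h -> Hc n%:R q%:R q%:R <= Hc n%:R m%:R m%:R.
Proof.
move=> n_ge2 h_le1 eps_lt0 eps_gt_h.
have [_ c_lo c_hi _] := pstar2_spec n_ge2 h_le1 eps_lt0 eps_gt_h.
by have := nat_sqr_round q c_lo c_hi; rewrite /Hcounts; nra.
Qed.

Lemma Hcounts_lo_ge_half_plus p :
  0 < - eps -> - eps < h -> (p <= n)%N -> Hc n%:R 0 0 <= Hc p%:R 0 0.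
Proof.
move=> eps_lt0 eps_gt_h le_pn; have : p%:R <= n%:R :> R by rewrite ler_nat.
move=> le_pn_R; have : 0 <= (n%:R - p%:R) * (p%:R - eps + h).
  by rewrite mulr_ge0 //; have := ler0n R p; lra.
by rewrite /Hcounts; nra.
Qed.

Lemma Hcounts_hi_ge_half_plus q :
  h <= 1 -> 0 < - eps -> - eps < h -> (q < m)%N -> Hc n%:R 0 0 <= Hc n%:R q%:R q%:R.
Proof.
move=> h_le1 eps_lt0 eps_gt_h lt_qm; have : q.+1%:R <= n%:R :> R by rewrite ler_nat; lia.
rewrite -natr1 => le_qn.
have : 0 <= q%:R * (n%:R - q%:R - eps - h) by rewrite mulr_ge0 //; lra.
by rewrite /Hcounts; nra.
Qed.

Lemma pstar2_max_Mp (z : config n) :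
  (2 <= n)%N -> h <= 1 -> 0 < - eps -> - eps < h ->
  z \in Cset n n (pstar2 n - n) (pstar2 n - n) :|: Cset n (pstar2 n - n) n (pstar2 n - n) ->
  (exists2 p : nat, (n <= p <= n + n)%N & z \in @Mp R n eps h p) /\
  (forall (p : nat) (e : config n), (n <= p <= n + n)%N -> e \in @Mp R n eps h p ->
     H eps h e <= H eps h z).
Proof.
move=> n_ge2 h_le1 eps_lt0 eps_gt_h.
have [-> _ _ _] := pstar2_spec n_ge2 h_le1 eps_lt0 eps_gt_h.
rewrite addKn => /(H_Cset_pair eps h)[Hz ups_z].
have eps_le0 : eps <= 0 by lra.
split.
  exists (n + m)%N; first by apply/andP; split; lia.
  by apply: mem_Mp => // t ups_t; rewrite Hz H_ge_hi.
move=> p e /andP[le_np le_p2n] e_min; rewrite Hz.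
apply: le_trans (Mp_min e_min (ups_prefix le_p2n)) _.
by rewrite -(subnKC le_np) H_prefix_hi ?Hcounts_hi_le_pstar2 //; lia.
Qed.

Lemma Gamma2_le_Gamma_m :
  (2 <= n)%N -> h <= 1 -> 0 < - eps -> - eps < h ->
  ((Gamma2 n eps h)%:E <= @Gamma_m R n eps h)%E.
Proof.
move=> n_ge2 h_le1 eps_lt0 eps_gt_h.
have [_ _ _ gap] := pstar2_spec n_ge2 h_le1 eps_lt0 eps_gt_h.
have [eps_le0 eps_le1] : eps <= 0 /\ eps <= 1 by split; lra.
have H_half : H eps h (@prefix_config n n) = Hc n%:R 0 0 by rewrite H_prefix_lo.
apply: (@Gamma_m_ge_stab _ _ _ _ (@prefix_config n n) (@prefix_config n (n + n))).
  rewrite H_half H_prefix_hi //.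
  have : 0 < n%:R * (eps + h) by apply: mulr_gt0; [rewrite ltr0n; lia | lra].
  by rewrite /Hcounts; nra.
apply: (@stab_ge_barrier _ _ _ _ _ (n + m)) => [e | z ups_z].
  rewrite ups_prefix ?leq_addr //= leqNgt H_half => lt_e; apply/negP => lt_e_nm.
  have [le_en | lt_ne] := leqP (ups e) n.
    have := H_ge_lo h e eps_le1; have := Hcounts_lo_ge_half_plus eps_lt0 eps_gt_h le_en.
    by lra.
  have ups_e : ups e = (n + (ups e - n))%N by lia.
  have := H_ge_hi h eps_le0 ups_e.
  have lt_em : (ups e - n < m)%N by lia.
  have := Hcounts_hi_ge_half_plus h_le1 eps_lt0 eps_gt_h lt_em.
  by lra.
by have := H_ge_hi h eps_le0 ups_z; rewrite H_half gap.
Qed.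

End AntiferromagneticCoupling.

Theorem proposition5p5 (R : realType) (n : nat) (eps h : R) :
  (2 <= n)%N -> 0 < h -> h <= 1 -> -1 <= eps -> eps <= 1 ->
  (* (a) *)
  ((0 <= eps ->
    let p1 : nat := if odd n then (if h <= eps then n.+1./2 else n./2) else n./2 in
    let G1 : R :=
      if ~~ odd n then (n%:R ^+ 2) / 2 + n%:R * (eps - h)
      else if h <= eps then (n%:R ^+ 2 - 1) / 2 + n.+1%:R * (eps - h)
      else (n%:R ^+ 2 - 1) / 2 + n.-1%:R * (eps - h) in
    (forall z : config n, z \in Cset n p1 0 0 :|: Cset n 0 p1 0 ->
       (exists2 p : nat, (p <= n + n)%N & z \in @Mp R n eps h p) /\
       (forall (p : nat) (e : config n), (p <= n + n)%N -> e \in @Mp R n eps h p ->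
          H eps h e <= H eps h z)) /\
    ((G1%:E <= @Gamma_m R n eps h)%E))
  /\
  (* (b) *)
   (0 < - eps -> - eps < h ->
    let p2 : nat := (3 * n)./2 in
    let G2 : R :=
      if ~~ odd n then (n%:R ^+ 2) / 2 - n%:R * (eps + h)
      else (n%:R ^+ 2 - 1) / 2 - n.-1%:R * (eps + h) in
    (forall z : config n,
       z \in Cset n n (p2 - n) (p2 - n) :|: Cset n (p2 - n) n (p2 - n) ->
       (exists2 p : nat, (n <= p <= n + n)%N & z \in @Mp R n eps h p) /\
       (forall (p : nat) (e : config n), (n <= p <= n + n)%N -> e \in @Mp R n eps h p ->
          H eps h e <= H eps h z)) /\
    ((G2%:E <= @Gamma_m R n eps h)%E))).
Proof.
move=> n_ge2 h_gt0 h_le1 _ eps_le1; split => [eps_ge0 | eps_lt0 eps_gt_h] /=.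
  by split; [move=> z; apply: pstar1_max_Mp | apply: Gamma1_le_Gamma_m].
by split; [move=> z; apply: pstar2_max_Mp | apply: Gamma2_le_Gamma_m].
Qed.
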